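(* Let $n>2$ be an integer, $a\in\mathbb{R}$ with $a\ne0$, $b\in\{1,-1\}$ and $c\in\mathbb{R}$. Let $M=m_n(a,b,c)$ be the $(n+1)\times(n+1)$ symmetric matrix with rows/columns indexed $0,\dots,n$, $(0,0)$-entry $-nc$, $(0,j)$- and $(j,0)$-entries $b$ for $j=1,\dots,n$, and lower-right $n\times n$ block the circulant $\mathrm{circ}(c,a,0,\dots,0,a)$ (diagonal $c$, entries $a$ at positions $(j,j')$ with $j'\equiv j\pm1\pmod n$, zeros elsewhere). Put $\varphi=2\pi/n$, $q=\lfloor n/2\rfloor$ and \[c_k=\frac{4a^2\cos(k\varphi)\bigl(1-\cos(k\varphi)\bigr)+n}{2(n+1)a\bigl(\cos(k\varphi)-1\bigr)},\qquad k=1,\dots,q.\] Then the number of distinct eigenvalues of $M$ is \[|\sigma(M)|=\begin{cases}\lfloor n/2\rfloor+1,& \text{if } c\in\{c_1,\dots,c_q\},\\ \lfloor n/2\rfloor+2,&\text{otherwise.}\end{cases}\] *)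

From HB Require Import structures.
From mathcomp Require Import all_boot all_order all_algebra.
From mathcomp Require Import all_classical all_reals all_analysis.
Set Implicit Arguments. Unset Strict Implicit. Unset Printing Implicit Defensive.
Import Order.TTheory GRing.Theory Num.Theory.
Local Open Scope ring_scope.

(* Index 0 is the special row;
   indices 1..n carry the circulant circ(c,a,0,...,0,a), with row/column j
   (1<=j<=n) corresponding to circulant position j-1 (mod n). *)
Definition mmat (R : ringType) (n : nat) (a b c : R) : 'M[R]_(n.+1) :=
  \matrix_(i < n.+1, j < n.+1)
    if (i == 0%N :> nat) && (j == 0%N :> nat) then - (n%:R * c)
    else if (i == 0%N :> nat) || (j == 0%N :> nat) then b
    else if i == j then c
    else if ((i.-1).+1 %% n == j.-1)%N || ((j.-1).+1 %% n == i.-1)%N then a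
    else 0.

Definition ck (R : realType) (n : nat) (a : R) (k : nat) : R :=
  let ckp := cos (k%:R * (2 * pi / n%:R)) in
  (4 * a ^+ 2 * ckp * (1 - ckp) + n%:R) /
  (2 * (n%:R + 1) * a * (ckp - 1)).

Definition num_distinct_eigenvalues (F : fieldType) (N : nat) (M : 'M[F]_N)
    (m : nat) : Prop :=
  exists s : seq F, [/\ uniq s, (forall x, eigenvalue M x <-> x \in s)
                    & size s = m].

From HB Require Import structures.
From mathcomp Require Import all_boot all_order all_algebra.
From mathcomp Require Import all_classical all_reals all_analysis.
From mathcomp Require Import ring lra zify.
Import Order.TTheory GRing.Theory Num.Theory.
Local Open Scope ring_scope.

(* The row vectors [(0, cos (k (p - m) phi))_p], for [0 < k < n], are eigenvectors
   of [m_n(a,b,c)] for [mu_k = c + 2 a cos (k phi)]; as [mu_k = mu_(n-k)] and cos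
   is injective on [[0, pi]], they contribute exactly the [q] values
   [mu_1, ..., mu_q].  The matrix is symmetric, so an eigenvector for any other
   eigenvalue is orthogonal to all of them, and discrete Fourier inversion makes
   its last [n] entries constant; its eigenvalue is then a root of
   [Q x = (x + n c) (x - c - 2 a) - n], which has two distinct real roots, and
   each root is an eigenvalue.  Finally [Q mu_k = 0] iff [c = c_k], and at most
   one [mu_k] can be a root of [Q]. *)

Lemma sym_eigenvectors_orthogonal {F : fieldType} {N : nat} {A : 'M[F]_N}
    {u v : 'rV[F]_N} {x y : F} :
  A^T = A -> u *m A = x *: u -> v *m A = y *: v -> x != y -> v *m u^T = 0.
Proof.
move=> symA Au Av xy.
have : (v *m A) *m u^T = x *: (v *m u^T).
  by rewrite -mulmxA -{1}symA -trmx_mul Au linearZ /= scalemxAr.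
rewrite Av -scalemxAl => /eqP; rewrite -subr_eq0 -scalerBl scaler_eq0 subr_eq0.
by rewrite eq_sym (negbTE xy) => /eqP.
Qed.

Lemma num_distinct_eigenvalues_undup {F : fieldType} {N : nat} {M : 'M[F]_N}
    {s : seq F} :
  (forall x, eigenvalue M x = (x \in s)) ->
  num_distinct_eigenvalues M (size (undup s)).
Proof.
move=> eigM; exists (undup s).
by split=> [|x|]; rewrite ?undup_uniq ?mem_undup ?eigM.
Qed.

Lemma size_undup_cons2 (T : eqType) (x y : T) (s : seq T) : uniq s -> x != y ->
  size (undup [:: x, y & s]) = (size s + (x \notin s) + (y \notin s))%N.
Proof.
move=> s_uniq xy; rewrite /= in_cons (negbTE xy) /= undup_id //.
by case: (x \in s); case: (y \in s); rewrite /= ?addn0 ?addn1 ?addnS.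
Qed.

Lemma notin_two_roots {T : eqType} {P : pred T} {x y : T} {s : seq T} :
  x != y -> (forall z, P z = (z == x) || (z == y)) ->
  {in s &, forall u v, P u -> P v -> u = v} ->
  ((x \notin s) + (y \notin s) = if has P s then 1 else 2)%N.
Proof.
move=> xy Pxy P_uniq.
have Px : P x by rewrite Pxy eqxx.
have Py : P y by rewrite Pxy eqxx orbT.
have not_both : ~~ ((x \in s) && (y \in s)).
  by apply/andP => -[xs ys]; move/eqP: xy; apply; apply: P_uniq.
case: hasP => [[z zs]|noP].
  by rewrite Pxy => /orP[]/eqP zE; move: not_both;
    rewrite -zE zs /=; case: (_ \in s).
have xs : x \notin s by apply/negP => xs; apply: noP; exists x.
have ys : y \notin s by apply/negP => ys; apply: noP; exists y.
by rewrite xs ys.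
Qed.

Lemma quadratic_two_roots (R : rcfType) (B C : R) : 0 < B ^+ 2 - 4 * C ->
  exists r1 r2 : R, r1 != r2 /\
    forall x, (x ^+ 2 + B * x + C == 0) = (x == r1) || (x == r2).
Proof.
set D := B ^+ 2 - 4 * C => D_gt0.
set s := Num.sqrt D.
have s_gt0 : 0 < s by rewrite sqrtr_gt0.
have ss : s * s = D by rewrite -expr2 sqr_sqrtr // ltW.
exists ((- B + s) / 2), ((- B - s) / 2); split; first by apply/eqP; lra.
move=> x.
suff -> : x ^+ 2 + B * x + C = (x - (- B + s) / 2) * (x - (- B - s) / 2).
  by rewrite mulf_eq0 !subr_eq0.
apply/eqP; rewrite -subr_eq0; apply/eqP.
have -> : x ^+ 2 + B * x + C - (x - (- B + s) / 2) * (x - (- B - s) / 2) =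
          (s * s - D) / 4 by rewrite /D; field.
by rewrite ss subrr mul0r.
Qed.

Lemma sum_delta (R : pzSemiRingType) (n : nat) (f : nat -> R) (r : nat) :
  (r < n)%N ->
  \sum_(p < n) f p * (p == r :> nat)%:R = f r.
Proof.
move=> rn; rewrite (bigD1 (Ordinal rn)) //= eqxx mulr1 big1 ?addr0 // => i ne.
by rewrite -[_ == r]/(i == Ordinal rn) (negbTE ne) mulr0.
Qed.

Lemma cosDn2pi {R : realType} (x : R) (k : nat) : cos (x + k%:R * (2 * pi)) = cos x.
Proof.
rewrite -[RHS](periodicn (@cosD2pi R) k); congr cos.
by rewrite -mulr_natl; ring.
Qed.

Lemma sinDn2pi {R : realType} (x : R) (k : nat) : sin (x + k%:R * (2 * pi)) = sin x.
Proof.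
rewrite -[RHS](periodicn (@sinD2pi R) k); congr sin.
by rewrite -mulr_natl; ring.
Qed.

Lemma sum_cos_arith_eq0 {R : realType} (n r : nat) (th : R) : (0 < r < n)%N ->
  \sum_(0 <= j < n) cos (j%:R * (r%:R * (2 * pi / n%:R)) + th) = 0.
Proof.
move=> /andP[r_gt0 r_ltn].
have n_neq0 : n%:R != 0 :> R by rewrite pnatr_eq0 -lt0n (leq_trans _ r_ltn).
set al := r%:R * (2 * pi / n%:R).
have sin_neq0 : sin (al / 2) != 0.
  apply/lt0r_neq0/sin_gt0_pi/andP; split.
    by rewrite divr_gt0 // !mulr_gt0 ?invr_gt0 ?ltr0n ?pi_gt0 // (leq_trans _ r_ltn).
  have -> : al / 2 = pi * (r%:R / n%:R) by rewrite /al; field.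
  rewrite gtr_pMr ?pi_gt0 // ltr_pdivrMr ?ltr0n ?mul1r ?ltr_nat //.
  exact: leq_trans r_ltn.
(* [2 sin(al/2) cos(j al + th) = sin((j + 1/2) al + th) - sin((j - 1/2) al + th)]
   telescopes. *)
pose G (j : nat) := sin (j%:R * al + th - al / 2).
apply: (mulfI sin_neq0); rewrite mulr0 mulr_sumr.
have -> : \sum_(0 <= j < n) sin (al / 2) * cos (j%:R * al + th) =
          \sum_(0 <= j < n) (G j.+1 - G j) / 2.
  apply: eq_bigr => j _; rewrite /G.
  have -> : j.+1%:R * al + th - al / 2 = (j%:R * al + th) + al / 2.
    by rewrite -addn1 natrD; field.
  by rewrite sinD sinB; field.
rewrite -mulr_suml telescope_sumr // /G.
have -> : n%:R * al + th - al / 2 = (th - al / 2) + r%:R * (2 * pi).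
  by rewrite /al; field.
by rewrite sinDn2pi mul0r add0r subrr mul0r.
Qed.

Section MmatSpectrum.
Variables (R : realType) (n : nat) (a b c : R).
Hypothesis n_gt2 : (2 < n)%N.

Local Notation M := (mmat n a b c).

Let n_gt0 : (0 < n)%N. Proof. by lia. Qed.

Lemma natr_n_neq0 : n%:R != 0 :> R.
Proof. by rewrite pnatr_eq0 -lt0n. Qed.

Definition cyc_pred (q : nat) := ((q + (n - 1)) %% n)%N.
Definition cyc_succ (q : nat) := (q.+1 %% n)%N.

Lemma cyc_predE q : (q < n)%N ->
  cyc_pred q = (if q == 0 then n - 1 else q - 1)%N.
Proof.
move=> q_ltn; rewrite /cyc_pred; case: eqP => [->|q_neq0].
  by rewrite add0n modn_small; lia.
by rewrite (_ : q + (n - 1) = q - 1 + n)%N ?modnDr ?modn_small; lia.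
Qed.

Lemma cyc_succE q : (q < n)%N -> cyc_succ q = (if q.+1 == n then 0 else q.+1)%N.
Proof.
move=> q_ltn; rewrite /cyc_succ; case: eqP => [->|q_neq]; first by rewrite modnn.
by rewrite modn_small; lia.
Qed.

Lemma cyc_succ_eq p q : (p < n)%N -> (q < n)%N ->
  (cyc_succ p == q) = (p == cyc_pred q).
Proof.
move=> p_ltn q_ltn; rewrite cyc_succE ?cyc_predE //.
by repeat case: ifP => /eqP ?; apply/eqP/eqP; lia.
Qed.

Lemma cyc_neighbours_neq q : (q < n)%N ->
  [/\ cyc_pred q != q, cyc_succ q != q & cyc_pred q != cyc_succ q].
Proof.
move=> q_ltn; rewrite cyc_predE ?cyc_succE //.
by repeat case: ifP => /eqP ?; split; apply/eqP; lia.
Qed.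

Lemma cyc_pred_ltn q : (cyc_pred q < n)%N. Proof. by rewrite ltn_mod. Qed.
Lemma cyc_succ_ltn q : (cyc_succ q < n)%N. Proof. by rewrite ltn_mod. Qed.

Lemma mmat_lift (p q : 'I_n) : M (lift ord0 p) (lift ord0 q) =
  c * (p == q :> nat)%:R + a * (p == cyc_pred q :> nat)%:R +
  a * (p == cyc_succ q :> nat)%:R.
Proof.
have [pred_q succ_q pred_succ] := cyc_neighbours_neq _ (ltn_ord q).
rewrite mxE !lift0 /= (inj_eq (@lift_inj _ ord0)) -[p == q]/(p == q :> nat).
rewrite -/(cyc_succ p) -/(cyc_succ q) cyc_succ_eq // (eq_sym _ (nat_of_ord p)).
have [->|_] := eqVneq (p : nat) q.
  by rewrite eq_sym (negbTE pred_q) eq_sym (negbTE succ_q) !mulr0 !addr0 mulr1.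
have [->|_] := eqVneq (p : nat) (cyc_pred q).
  by rewrite (negbTE pred_succ) !mulr0 add0r addr0 mulr1.
by case: eqP; rewrite !mulr0 !add0r ?mulr1.
Qed.

Lemma sum_mul_mmat_lift (f : nat -> R) (q : 'I_n) :
  \sum_(p < n) f p * M (lift ord0 p) (lift ord0 q) =
  c * f q + a * f (cyc_pred q) + a * f (cyc_succ q).
Proof.
under eq_bigr => p _ do rewrite mmat_lift !mulrDr !mulrA ![f p * _]mulrC -!mulrA.
by rewrite !big_split /= -!mulr_sumr !sum_delta ?cyc_pred_ltn ?cyc_succ_ltn.
Qed.

Lemma tr_mmat : M^T = M.
Proof.
apply/matrixP => i j; rewrite !mxE andbC (orbC (j == 0%N :> nat)) (eq_sym j i).
by rewrite (orbC (_ == j.-1)%N).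
Qed.

Definition rtail (v : 'rV[R]_n.+1) (p : nat) := v 0 (inord p.+1).

Lemma rtailE (v : 'rV[R]_n.+1) (p : 'I_n) : v 0 (lift ord0 p) = rtail v p.
Proof. by rewrite /rtail; congr (v 0 _); apply/val_inj; rewrite /= inordK ?ltnS. Qed.

Lemma mulmx_mmat0 (v : 'rV[R]_n.+1) :
  (v *m M) 0 ord0 = v 0 ord0 * - (n%:R * c) + b * \sum_(p < n) rtail v p.
Proof.
rewrite mxE big_ord_recl mxE /= mulr_sumr; congr (_ + _).
by apply: eq_bigr => p _; rewrite mxE lift0 /= rtailE mulrC.
Qed.

Lemma mulmx_mmat_lift (v : 'rV[R]_n.+1) (q : 'I_n) :
  (v *m M) 0 (lift ord0 q) = v 0 ord0 * b +
    (c * rtail v q + a * rtail v (cyc_pred q) + a * rtail v (cyc_succ q)).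
Proof.
rewrite mxE big_ord_recl mxE lift0 /=; congr (_ + _).
by rewrite -sum_mul_mmat_lift; apply: eq_bigr => p _; rewrite rtailE.
Qed.

Definition phi : R := 2 * pi / n%:R.
Definition circ_eigval (k : nat) := c + 2 * a * cos (k%:R * phi).
Definition cos_wave (k m p : nat) := cos (k%:R * ((p%:R - m%:R) * phi)).
Definition circ_eigvec (k m : nat) : 'rV[R]_n.+1 :=
  \row_(i < n.+1) (if i == 0%N :> nat then 0 else cos_wave k m i.-1).

Lemma natr_n_mul_phi : n%:R * phi = 2 * pi.
Proof. by rewrite /phi; field; exact: natr_n_neq0. Qed.

Lemma cos_mulDn_phi (k : nat) (x : R) :
  cos (k%:R * ((x + n%:R) * phi)) = cos (k%:R * (x * phi)).
Proof.
by rewrite -[RHS](cosDn2pi _ k) -natr_n_mul_phi; congr cos; ring.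
Qed.

Lemma rtail_circ_eigvec k m p : (p < n)%N ->
  rtail (circ_eigvec k m) p = cos_wave k m p.
Proof. by move=> p_ltn; rewrite /rtail mxE inordK ?ltnS. Qed.

Lemma cos_wave_neighbours k m q : (q < n)%N ->
  cos_wave k m (cyc_pred q) + cos_wave k m (cyc_succ q) =
  2 * cos (k%:R * phi) * cos_wave k m q.
Proof.
move=> q_ltn; set X := (q%:R - m%:R : R).
have -> : cos_wave k m (cyc_pred q) = cos (k%:R * ((X - 1) * phi)).
  rewrite /cos_wave cyc_predE //; case: eqP => [q0|q_neq0].
    rewrite -cos_mulDn_phi /X q0 natrB; last by lia.
    by congr cos; ring.
  by rewrite natrB; last lia; rewrite /X; congr cos; ring.
have -> : cos_wave k m (cyc_succ q) = cos (k%:R * ((X + 1) * phi)).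
  rewrite /cos_wave cyc_succE //; case: eqP => [qn|qn].
    by rewrite -[LHS]cos_mulDn_phi /X -qn -addn1 natrD; congr cos; ring.
  by rewrite /X -addn1 natrD; congr cos; ring.
have -> : k%:R * ((X - 1) * phi) = k%:R * (X * phi) - k%:R * phi by ring.
have -> : k%:R * ((X + 1) * phi) = k%:R * (X * phi) + k%:R * phi by ring.
by rewrite cosB cosD /cos_wave -/X; ring.
Qed.

Lemma sum_cos_wave_eq0 k m : (0 < k < n)%N -> \sum_(p < n) cos_wave k m p = 0.
Proof.
move=> k_range; rewrite -(big_mkord xpredT (cos_wave k m)).
rewrite -[RHS](sum_cos_arith_eq0 _ _ (k%:R * (- m%:R * phi)) k_range).
by apply: eq_bigr => p _; rewrite /cos_wave /phi; congr cos; ring.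
Qed.

Lemma circ_eigvecP k m : (0 < k < n)%N ->
  circ_eigvec k m *m M = circ_eigval k *: circ_eigvec k m.
Proof.
move=> k_range; apply/rowP => j; rewrite [RHS]mxE.
have head0 : circ_eigvec k m 0 ord0 = 0 by rewrite mxE.
case: (unliftP ord0 j) => [q ->|->].
  rewrite mulmx_mmat_lift head0 rtailE.
  rewrite !rtail_circ_eigvec ?cyc_pred_ltn ?cyc_succ_ltn //.
  by rewrite mul0r add0r -addrA -mulrDr cos_wave_neighbours // /circ_eigval; ring.
rewrite mulmx_mmat0 head0 (eq_bigr (fun p : 'I_n => cos_wave k m p)).
  by rewrite sum_cos_wave_eq0 // mulr0 mul0r addr0 mulr0.
by move=> p _; rewrite rtail_circ_eigvec.
Qed.

Lemma circ_eigvec_neq0 k : circ_eigvec k 0 != 0.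
Proof.
apply/negP => /eqP/rowP/(_ (lift ord0 (Ordinal n_gt0))).
by rewrite !mxE lift0 /= /cos_wave subrr mul0r mulr0 cos0 => /eqP; rewrite oner_eq0.
Qed.

Lemma sum_freq_cos_wave p m : (p < n)%N -> (m < n)%N ->
  \sum_(1 <= k < n) cos_wave k m p = n%:R * (p == m)%:R - 1.
Proof.
move=> p_ltn m_ltn.
have cos_wave0 : cos_wave 0 m p = 1 by rewrite /cos_wave mul0r cos0.
have [->|pm] := eqVneq p m.
  rewrite (eq_bigr (fun=> 1)) => [|k _].
    by rewrite sumr_const_nat mulr1 natrB.
  by rewrite /cos_wave subrr mul0r mulr0 cos0.
suff : \sum_(0 <= k < n) cos_wave k m p = 0.
  rewrite mulr0 add0r big_ltn // cos_wave0.
  by move/eqP; rewrite addrC addr_eq0 => /eqP.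
have [pm_lt|mp_lt|] := ltngtP p m; last by move/eqP: pm.
  rewrite -[RHS](@sum_cos_arith_eq0 R n (m - p) 0); last by lia.
  apply: eq_bigr => k _; rewrite /cos_wave -cosN natrB; last by lia.
  by congr cos; rewrite /phi; ring.
rewrite -[RHS](@sum_cos_arith_eq0 R n (p - m) 0); last by lia.
apply: eq_bigr => k _; rewrite /cos_wave natrB; last by lia.
by congr cos; rewrite /phi; ring.
Qed.

Lemma orthogonal_cos_waves_const (f : nat -> R) :
  (forall k m, (0 < k < n)%N -> \sum_(p < n) f p * cos_wave k m p = 0) ->
  forall m, (m < n)%N -> n%:R * f m = \sum_(p < n) f p.
Proof.
move=> orth m m_ltn.
have : \sum_(1 <= k < n) \sum_(p < n) f p * cos_wave k m p = 0.
  by rewrite big_nat_cond big1 // => k /andP[/andP[k_ge1 k_ltn] _]; apply: orth; lia.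
rewrite exchange_big /=.
under eq_bigr => p _ do rewrite -mulr_sumr sum_freq_cos_wave // mulrBr mulr1 mulrCA.
by rewrite sumrB -mulr_sumr sum_delta // => /eqP; rewrite subr_eq0 => /eqP.
Qed.

Lemma orthogonal_circ_eigvec {v : 'rV[R]_n.+1} {x k} m :
  v *m M = x *: v -> (0 < k < n)%N -> x != circ_eigval k ->
  \sum_(p < n) rtail v p * cos_wave k m p = 0.
Proof.
move=> Av k_range x_neq.
have eigval_neq : circ_eigval k != x by rewrite eq_sym.
have /matrixP/(_ 0 0) :=
  sym_eigenvectors_orthogonal tr_mmat (circ_eigvecP k m k_range) Av eigval_neq.
rewrite !mxE big_ord_recl !mxE /= mulr0 add0r => orth; rewrite -[RHS]orth.
by apply: eq_bigr => p _; rewrite !mxE lift0 /= rtailE.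
Qed.

Lemma circ_eigval_sym k : (k < n)%N -> circ_eigval (n - k) = circ_eigval k.
Proof.
move=> k_ltn; rewrite /circ_eigval natrB ?(ltnW k_ltn) //.
have -> : (n%:R - k%:R) * phi = - (k%:R * phi) + 1%:R * (2 * pi).
  by rewrite mulrBl natr_n_mul_phi; ring.
by rewrite cosDn2pi cosN.
Qed.

Lemma phi_gt0 : 0 < phi.
Proof. by rewrite divr_gt0 ?mulr_gt0 ?pi_gt0 ?ltr0n. Qed.

Lemma mul_phi_in_0pi k : (k <= n./2)%N -> k%:R * phi \in `[0, pi].
Proof.
move=> k_le; rewrite in_itv /=; apply/andP; split.
  by rewrite mulr_ge0 // ltW // phi_gt0.
have -> : k%:R * phi = pi * ((k * 2)%:R / n%:R).
  by rewrite /phi natrM; field; exact: natr_n_neq0.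
by rewrite ler_piMr ?pi_ge0 // ler_pdivrMr ?ltr0n // mul1r ler_nat; lia.
Qed.

Lemma cos_mul_phi_inj j k : (j <= n./2)%N -> (k <= n./2)%N ->
  cos (j%:R * phi) = cos (k%:R * phi) -> j = k.
Proof.
move=> j_le k_le /(cos_inj (mul_phi_in_0pi _ j_le) (mul_phi_in_0pi _ k_le)).
by move/(mulIf (lt0r_neq0 phi_gt0))/eqP; rewrite eqr_nat => /eqP.
Qed.

Lemma cos_mul_phi_lt1 k : (0 < k <= n./2)%N -> cos (k%:R * phi) < 1.
Proof.
case/andP=> k_gt0 k_le; rewrite lt_neqAle cos_le1 andbT; apply/eqP => cos1.
suff k0 : k = 0%N by rewrite k0 in k_gt0.
by apply: cos_mul_phi_inj _ _ k_le (leq0n _) _; rewrite cos1 mul0r cos0.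
Qed.

Definition border_quad (x : R) := (x + n%:R * c) * (x - c - 2 * a) - n%:R.

Lemma border_quad_two_roots : exists r1 r2 : R, r1 != r2 /\
  forall x, (border_quad x == 0) = (x == r1) || (x == r2).
Proof.
pose B := n%:R * c - c - 2 * a; pose C := - (n%:R * c * (c + 2 * a) + n%:R).
have [|r1 [r2 [r12 roots]]] := @quadratic_two_roots _ B C.
  have -> : B ^+ 2 - 4 * C = (n%:R * c + c + 2 * a) ^+ 2 + 4 * n%:R.
    by rewrite /B /C; ring.
  by rewrite ltr_wpDl ?sqr_ge0 // mulr_gt0 ?ltr0n.
exists r1, r2; split=> // x; rewrite -roots /border_quad /B /C.
by congr (_ == 0); ring.
Qed.

Definition circ_eigvals := [seq circ_eigval k | k <- iota 1 n./2].

Lemma circ_eigvalsP x :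
  reflect (exists2 k, (0 < k <= n./2)%N & x = circ_eigval k) (x \in circ_eigvals).
Proof.
apply: (iffP mapP) => -[k k_range ->]; exists k => //.
  by move: k_range; rewrite mem_iota; lia.
by rewrite mem_iota; lia.
Qed.

Section BorderEigenvectors.

Hypothesis b_sq : b * b = 1.

Let b_neq0 : b != 0.
Proof.
by apply/eqP => b0; move: b_sq; rewrite b0 mulr0 => /eqP; rewrite eq_sym oner_eq0.
Qed.

Definition border_eigvec (x : R) : 'rV[R]_n.+1 :=
  \row_(i < n.+1) (if i == 0%N :> nat then x - c - 2 * a else b).

Lemma border_eigvecP x :
  border_quad x = 0 -> border_eigvec x *m M = x *: border_eigvec x.
Proof.
move=> Qx; apply/rowP => j; rewrite [RHS]mxE.
have head : border_eigvec x 0 ord0 = x - c - 2 * a by rewrite mxE.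
have tail p : (p < n)%N -> rtail (border_eigvec x) p = b.
  by move=> p_ltn; rewrite /rtail mxE inordK ?ltnS.
case: (unliftP ord0 j) => [q ->|->].
  rewrite mulmx_mmat_lift head !tail ?cyc_pred_ltn ?cyc_succ_ltn //.
  by rewrite rtailE tail //; ring.
rewrite mulmx_mmat0 head (eq_bigr (fun=> b)) => [|p _]; last by rewrite tail.
rewrite sumr_const card_ord mulrnAr b_sq.
by apply: subr0_eq; rewrite -oppr0 -Qx /border_quad; ring.
Qed.

Lemma border_eigvec_neq0 x : border_eigvec x != 0.
Proof.
apply/negP => /eqP/rowP/(_ (lift ord0 (Ordinal n_gt0))).
by rewrite !mxE lift0 /= => /eqP; rewrite (negbTE b_neq0).
Qed.

Lemma border_eigval (v : 'rV[R]_n.+1) x : v *m M = x *: v -> v != 0 ->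
  (forall k, (0 < k < n)%N -> x != circ_eigval k) -> border_quad x = 0.
Proof.
move=> Av v_neq0 x_neq.
pose t := (\sum_(p < n) rtail v p) / n%:R.
have tail_const m : (m < n)%N -> rtail v m = t.
  move=> m_ltn; apply: (mulfI natr_n_neq0).
  rewrite (orthogonal_cos_waves_const _ _ _ m_ltn) => [|k m' k_range].
    by rewrite /t mulrC divfK // natr_n_neq0.
  exact: orthogonal_circ_eigvec m' Av k_range (x_neq k k_range).
have sum_tail : \sum_(p < n) rtail v p = n%:R * t.
  by rewrite /t mulrC divfK // natr_n_neq0.
set v0 := v 0 ord0.
have eq0 : v0 * - (n%:R * c) + b * (n%:R * t) = x * v0.
  by rewrite -sum_tail -mulmx_mmat0 Av mxE.
have eq1 : v0 * b + (c * t + a * t + a * t) = x * t.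
  have := mulmx_mmat_lift v (Ordinal n_gt0).
  by rewrite Av mxE rtailE !tail_const ?cyc_pred_ltn ?cyc_succ_ltn // => <-.
have Qt : border_quad x * t = 0.
  have -> : border_quad x * t =
      - (x + n%:R * c) * (v0 * b + (c * t + a * t + a * t) - x * t)
      - b * (v0 * - (n%:R * c) + b * (n%:R * t) - x * v0) + n%:R * t * (b * b - 1).
    by rewrite /border_quad; ring.
  by rewrite eq0 eq1 b_sq !subrr !mulr0 subr0 addr0.
move/eqP: Qt; rewrite mulf_eq0 => /orP[/eqP //|/eqP t0].
case/eqP: v_neq0; apply/rowP => i; rewrite mxE.
case: (unliftP ord0 i) => [q ->|->]; first by rewrite rtailE tail_const.
move/eqP: eq1; rewrite t0 !mulr0 !addr0 mulf_eq0 (negbTE b_neq0) orbF.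
by move/eqP.
Qed.

Lemma eigenvalue_mmatE x :
  eigenvalue M x = (border_quad x == 0) || (x \in circ_eigvals).
Proof.
apply/eigenvalueP/orP => [[v Av v_neq0]|].
  have [[k k_range ->]|no_circ] :=
    pselect (exists2 k, (0 < k < n)%N & x = circ_eigval k).
    right; apply/circ_eigvalsP; have [k_le|k_gt] := leqP k n./2.
      by exists k => //; lia.
    by exists (n - k)%N; [lia | rewrite circ_eigval_sym //; lia].
  left; apply/eqP; apply: (border_eigval _ _ Av v_neq0) => k k_range.
  by apply/eqP => x_eq; apply: no_circ; exists k.
case=> [/eqP Qx | /circ_eigvalsP[k k_range ->]].
  by exists (border_eigvec x); [exact: border_eigvecP | exact: border_eigvec_neq0].
exists (circ_eigvec k 0); last exact: circ_eigvec_neq0.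
by apply: circ_eigvecP; lia.
Qed.

End BorderEigenvectors.

Section DistinctCircEigenvalues.

Hypothesis a_neq0 : a != 0.

Lemma circ_eigval_inj j k : (j <= n./2)%N -> (k <= n./2)%N ->
  circ_eigval j = circ_eigval k -> j = k.
Proof.
move=> j_le k_le /addrI/mulfI eq_cos.
apply: cos_mul_phi_inj _ _ j_le k_le (eq_cos _).
by rewrite mulf_neq0 ?pnatr_eq0.
Qed.

Lemma border_quad_circ_eigval k : (0 < k <= n./2)%N ->
  border_quad (circ_eigval k) = 0 <-> c = ck n a k.
Proof.
move=> k_range; have := cos_mul_phi_lt1 _ k_range.
rewrite /ck -/phi /border_quad /circ_eigval; set y := cos (k%:R * phi) => y_lt1.
have den_neq0 : 2 * (n%:R + 1) * a * (y - 1) != 0.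
  by rewrite !mulf_neq0 ?subr_eq0 ?(lt_eqF y_lt1) // ?pnatr_eq0 // -natr1 pnatr_eq0.
have -> : (c + 2 * a * y + n%:R * c) * (c + 2 * a * y - c - 2 * a) - n%:R =
    c * (2 * (n%:R + 1) * a * (y - 1)) - (4 * a ^+ 2 * y * (1 - y) + n%:R) by ring.
split=> [/eqP|->]; last by rewrite divfK // subrr.
by rewrite subr_eq0 => /eqP <-; rewrite mulfK.
Qed.

(* Two distinct roots [c + 2 a x] and [c + 2 a y] of [border_quad] would add up
   to [c + 2 a - n c]; this forces [n = 4 a^2 (x - 1) (1 - y) <= 0]. *)
Lemma border_quad_circ_eigval_unique j k :
  border_quad (circ_eigval j) = 0 -> border_quad (circ_eigval k) = 0 ->
  circ_eigval j = circ_eigval k.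
Proof.
have x_le1 := cos_le1 (j%:R * phi); have y_le1 := cos_le1 (k%:R * phi).
rewrite /border_quad /circ_eigval.
set x := cos (j%:R * phi); set y := cos (k%:R * phi) => Qj Qk.
apply/eqP; apply: contraT => neq.
have sum_roots : (n%:R + 1) * c - 2 * a * (1 - x - y) = 0.
  have : (c + 2 * a * x - (c + 2 * a * y)) *
         ((n%:R + 1) * c - 2 * a * (1 - x - y)) = 0.
    by rewrite -[RHS](subrr 0) -{1}Qj -Qk; ring.
  by move/eqP; rewrite mulf_eq0 subr_eq0 (negbTE neq) => /eqP.
have n_eq : n%:R = 4 * (a * a) * ((x - 1) * (1 - y)).
  transitivity ((c + 2 * a * x + n%:R * c) * (c + 2 * a * x - c - 2 * a) -
                2 * a * (x - 1) * ((n%:R + 1) * c - 2 * a * (1 - x - y))).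
    by rewrite sum_roots mulr0 subr0; lra.
  by ring.
have aa_ge0 : 0 <= 4 * (a * a) by rewrite mulr_ge0 // -expr2 sqr_ge0.
have xy_le0 : (x - 1) * (1 - y) <= 0 by rewrite mulr_le0_ge0 // ?subr_le0 ?subr_ge0.
have := mulr_ge0_le0 aa_ge0 xy_le0.
by rewrite -n_eq leNgt ltr0n n_gt0.
Qed.

Lemma circ_eigvals_uniq : uniq circ_eigvals.
Proof.
rewrite map_inj_in_uniq ?iota_uniq // => j k; rewrite !mem_iota => j_range k_range.
by apply: circ_eigval_inj; lia.
Qed.

Lemma has_border_root_circ_eigvals :
  has (fun x => border_quad x == 0) circ_eigvals =
  `[< exists k, [/\ (1 <= k)%N, (k <= n./2)%N & c = ck n a k] >].
Proof.
apply/hasP/asboolP => [[_ /circ_eigvalsP[k k_range ->] /eqP]|[k [k_ge1 k_le c_eq]]].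
  by move/(border_quad_circ_eigval _ k_range) => c_eq; exists k; split=> //; lia.
have k_range : (0 < k <= n./2)%N by lia.
exists (circ_eigval k); first by apply/circ_eigvalsP; exists k.
by apply/eqP/(border_quad_circ_eigval _ k_range).
Qed.

Lemma border_root_circ_eigvals_unique :
  {in circ_eigvals &, forall x y, border_quad x == 0 -> border_quad y == 0 -> x = y}.
Proof.
move=> _ _ /circ_eigvalsP[j _ ->] /circ_eigvalsP[k _ ->] /eqP Qj /eqP Qk.
exact: border_quad_circ_eigval_unique.
Qed.

End DistinctCircEigenvalues.

End MmatSpectrum.

Theorem theorem5 (R : realType) (n : nat) (a b c : R) :
  (2 < n)%N -> a != 0 -> (b = 1 \/ b = -1) ->
  num_distinct_eigenvalues (mmat n a b c)
    (if `[< exists k : nat, [/\ (1 <= k)%N, (k <= n./2)%N & c = ck n a k] >]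
     then (n./2).+1 else (n./2).+2).
Proof.
move=> n_gt2 a_neq0 b_pm1.
have b_sq : b * b = 1 by case: b_pm1 => ->; rewrite ?mulrNN mulr1.
have [r1 [r2 [r12 border_roots]]] := border_quad_two_roots _ _ a c n_gt2.
set L := circ_eigvals _ n a c.
have spec x : eigenvalue (mmat n a b c) x = (x \in [:: r1, r2 & L]).
  by rewrite eigenvalue_mmatE // border_roots !in_cons orbA.
have := num_distinct_eigenvalues_undup spec.
rewrite size_undup_cons2 ?circ_eigvals_uniq // -addnA.
rewrite (notin_two_roots r12 border_roots); last first.
  exact: border_root_circ_eigvals_unique.
rewrite has_border_root_circ_eigvals // size_map size_iota.
by case: (asbool _); rewrite ?addn1 ?addn2.
Qed.
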